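(* Suppose $a<\mathcal U_L^{-1}$ and that $\mathbf X^{RSAA}\in\mathcal S_p$ satisfies the S$^3$ONC$(\mathbf Z_1^n)$ almost surely. Then $$\mathbb P\big[\,|\sigma_j(\mathbf X^{RSAA})|\notin(0,a\lambda)\ \text{for all } j=1,\dots,p\,\big]=1.$$
   Context: $\mathcal S_p$ is the cone of $p\times p$ symmetric positive semidefinite matrices; $\sigma_j(\mathbf X)$ is the $j$-th eigenvalue (singular value) of $\mathbf X$. $Z_1,\dots,Z_n$ are i.i.d. random vectors in $\mathcal W\subseteq\mathbb R^q$, $f:\mathcal S_p\times\mathcal W\to\mathbb R$ measurable, $\mathcal F_n(\mathbf X,\mathbf Z_1^n)=\frac1n\sum_i f(\mathbf X,Z_i)$. For $a,\lambda>0$, $P_\lambda(x)=\int_0^x\frac{[a\lambda-t]_+}{a}dt$ and $\mathcal F_{n,\lambda}(\mathbf X,\mathbf Z_1^n)=\mathcal F_n(\mathbf X,\mathbf Z_1^n)+\sum_{j=1}^pP_\lambda(\sigma_j(\mathbf X))$. $\mathcal U_L\ge1$ is a constant. A matrix $\hat{\mathbf X}\in\mathcal S_p$ satisfies S$^3$ONC$(\mathbf Z_1^n)$ if (a) $\nabla\mathcal F_{n,\lambda}(\hat{\mathbf X},\mathbf Z_1^n)=0$, and (b) for every $j$ with $\sigma_j(\hat{\mathbf X})\in(0,a\lambda)$, $\mathcal U_L+\frac{\partial^2P_\lambda(\sigma_j(\mathbf X))}{[\partial\sigma_j(\mathbf X)]^2}\big|_{\mathbf X=\hat{\mathbf X}}\ge0$.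 *)

From HB Require Import structures.
From mathcomp Require Import all_boot all_order all_algebra.
From mathcomp Require Import all_classical all_reals all_analysis.
From mathcomp Require Import polyrcf.
Set Implicit Arguments. Unset Strict Implicit. Unset Printing Implicit Defensive.
Import Order.TTheory GRing.Theory Num.Theory.
Import numFieldNormedType.Exports.
Local Open Scope classical_set_scope.
Local Open Scope ring_scope.

Section Defs.
Variable R : realType.

Definition psd_cone (p : nat) : set 'M[R]_p :=
  [set A | A^T = A /\ forall v : 'cV[R]_p, 0 <= (v^T *m A *m v) ord0 ord0].
Arguments psd_cone : clear implicits.

(* Eigenvalues (with algebraic multiplicity) of a real square matrix whose
   characteristic polynomial splits over R, sorted in non-increasing order:
   the real roots of char_poly, each repeated mup times. *)
Definition eigvals_sorted (p : nat) (A : 'M[R]_p) : seq R :=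
  let c := char_poly A in
  sort (fun x y : R => y <= x)
       (flatten [seq nseq (mup x c) x | x <- rootsR c]).

(* sigma_j(X): the j-th largest singular value of X (j is 0-based here:
   j : 'I_p stands for the paper's index j+1).  sigma_j(X) is the square
   root of the j-th largest eigenvalue of X^T X; for X in S_p it is the
   j-th largest eigenvalue of X. *)
Definition sigma (p : nat) (j : 'I_p) (X : 'M[R]_p) : R :=
  Num.sqrt (nth 0 (eigvals_sorted (X^T *m X)) j).

Definition Plam (a lam : R) (x : R) : R :=
  let g := fun t : R => Num.max (a * lam - t) 0 / a in
  if 0 <= x then Rintegral lebesgue_measure `[0, x] g
  else - Rintegral lebesgue_measure `[x, 0] g.

Definition Fn (p q n : nat) (f : 'M[R]_p -> 'rV[R]_q -> R)
    (Z : 'I_n -> 'rV[R]_q) (X : 'M[R]_p) : R :=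
  n%:R^-1 * \sum_(i < n) f X (Z i).

Definition Fnlam (p q n : nat) (a lam : R) (f : 'M[R]_p -> 'rV[R]_q -> R)
    (Z : 'I_n -> 'rV[R]_q) (X : 'M[R]_p) : R :=
  Fn f Z X + \sum_(j < p) Plam a lam (sigma j X).

Definition S3ONC (p q n : nat) (a lam UL : R) (f : 'M[R]_p -> 'rV[R]_q -> R)
    (Z : 'I_n -> 'rV[R]_q) (Xhat : 'M[R]_p) : Prop :=
  psd_cone p Xhat /\
  (differentiable (Fnlam a lam f Z) Xhat /\
   forall H : 'M[R]_p, 'd (Fnlam a lam f Z) Xhat H = 0) /\
  (forall j : 'I_p, 0 < sigma j Xhat < a * lam ->
     0 <= UL + derive1 (derive1 (Plam a lam)) (sigma j Xhat)).

(* Measurable sets of R^q (row vectors): sigma-algebra generated by the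
   coordinate maps, i.e. the Borel sigma-algebra of R^q. *)
Definition rvec_measurable (q : nat) : set (set 'rV[R]_q) :=
  <<s [set S | exists (k : 'I_q) (B : set R), measurable B /\
                 S = (fun v : 'rV[R]_q => v ord0 k) @^-1` B] >>.

(* Measurable sets of S_p x W-ambient space 'M_p * 'rV_q (Borel). *)
Definition mxrv_measurable (p q : nat) : set (set ('M[R]_p * 'rV[R]_q)) :=
  <<s [set S | exists (B : set R),  measurable B /\
        ((exists i j : 'I_p, S = (fun u : 'M[R]_p * 'rV[R]_q => u.1 i j) @^-1` B)
         \/ (exists k : 'I_q, S = (fun u : 'M[R]_p * 'rV[R]_q => u.2 ord0 k) @^-1` B))] >>.

Definition f_measurable (p q : nat) (W : set 'rV[R]_q)
    (f : 'M[R]_p -> 'rV[R]_q -> R) : Prop :=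
  forall B : set R, measurable B ->
    exists S, mxrv_measurable S /\
      [set u | psd_cone p u.1 /\ W u.2 /\ B (f u.1 u.2)] =
      S `&` [set u | psd_cone p u.1 /\ W u.2].

Definition iid_rvecs d (Omega : measurableType d) (P : probability Omega R)
    (q n : nat) (Z : 'I_n -> Omega -> 'rV[R]_q) : Prop :=
  (forall (i : 'I_n) (k : 'I_q),
      measurable_fun setT (fun w => Z i w ord0 k)) /\
  (forall B : 'I_n -> set 'rV[R]_q, (forall i, rvec_measurable (B i)) ->
      P (\bigcap_(i in [set: 'I_n]) (Z i @^-1` B i)) =
      (\prod_(i < n) P (Z i @^-1` B i))%E) /\
  (forall (i j : 'I_n) (B : set 'rV[R]_q), rvec_measurable B ->
      P (Z i @^-1` B) = P (Z j @^-1` B)).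

End Defs.
Arguments psd_cone {R} p.

(* On the concave region (0, a lam) the penalty P_lam is the quadratic
   lam x - x^2 / (2 a), so its second derivative there is -1/a.  When
   a < UL^-1 this makes UL + P_lam'' = UL - 1/a negative, so the
   second-order part of S^3ONC excludes every singular value from (0, a lam);
   the probabilistic statement follows pointwise on the almost sure event. *)
From HB Require Import structures.
From mathcomp Require Import all_boot all_order all_algebra.
From mathcomp Require Import all_classical all_reals all_analysis.
From mathcomp Require Import ring.
Import Order.TTheory GRing.Theory Num.Theory.
Import numFieldNormedType.Exports.
Local Open Scope classical_set_scope.
Local Open Scope ring_scope.

Section MinimaxConcavePenalty.
Variable R : realType.
Variables a lam : R.
Hypothesis a_gt0 : 0 < a.

Let scaleE (k y : R) : k *: y = k * y. Proof. by []. Qed.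

(* Written with function combinators so that [is_derive_eq] can find the
   derivatives through the canonical [is_derive] instances. *)
Definition mcp_quadratic : R -> R :=
  (lam \*: (@id R)) - ((2 * a)^-1 \*: ((@id R) * (@id R))).

Definition mcp_slope : R -> R := cst lam - a^-1 \*: (@id R).

Lemma mcp_quadraticE y : mcp_quadratic y = lam * y - y * y / (2 * a).
Proof. by rewrite /mcp_quadratic !fctE /= !scaleE; field; rewrite lt0r_neq0. Qed.

Lemma mcp_slopeE y : mcp_slope y = lam - y / a.
Proof. by rewrite /mcp_slope !fctE /= scaleE mulrC. Qed.

Lemma is_derive_mcp_quadratic (y : R) : is_derive y 1 mcp_quadratic (mcp_slope y).
Proof.
apply: is_derive_eq; rewrite mcp_slopeE /= !scaleE.
by field; rewrite lt0r_neq0.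
Qed.

Lemma is_derive_mcp_slope (y : R) : is_derive y 1 mcp_slope (- a^-1).
Proof. by apply: is_derive_eq; rewrite /= scaleE mulr1 sub0r. Qed.

Lemma Plam_quadratic x : 0 < x <= a * lam -> Plam a lam x = mcp_quadratic x.
Proof.
case/andP=> x_gt0 x_le; rewrite /Plam (ltW x_gt0).
have quad_cont y : {for y, continuous mcp_quadratic}.
  apply: differentiable_continuous; apply/derivable1_diffP.
  by case: (is_derive_mcp_quadratic y).
transitivity (Rintegral lebesgue_measure `[0, x] mcp_slope).
  apply: eq_Rintegral => t; rewrite inE /= in_itv /= => /andP[t_ge0 t_le].
  transitivity (mcp_slope t); last by [].
  rewrite mcp_slopeE max_l; last by rewrite subr_ge0 (le_trans t_le).
  by rewrite mulrBl mulrAC divff ?lt0r_neq0 // mul1r.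
rewrite /Rintegral (@continuous_FTC2 _ mcp_slope mcp_quadratic _ _ x_gt0).
- by rewrite /= !mcp_quadraticE mulr0 !mul0r !subr0.
- apply: derivable_within_continuous => y _.
  by case: (is_derive_mcp_slope y).
- split.
  + by move=> y _; case: (is_derive_mcp_quadratic y).
  + exact/cvg_at_right_filter/quad_cont.
  + exact/cvg_at_left_filter/quad_cont.
- by move=> y _; rewrite derive1E (@derive_val _ _ _ _ _ _ _ (is_derive_mcp_quadratic y)).
Qed.

Lemma derive1_Plam s : 0 < s < a * lam -> derive1 (Plam a lam) s = mcp_slope s.
Proof.
move=> s_in; rewrite derive1E (@near_eq_derive _ _ _ _ mcp_quadratic).
  exact: (@derive_val _ _ _ _ _ _ _ (is_derive_mcp_quadratic s)).
have : s \in `]0, a * lam[ by rewrite in_itv.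
move/near_in_itvoo; apply: filterS => y; rewrite in_itv /= => /andP[y0 yl].
by apply: Plam_quadratic; rewrite y0 ltW.
Qed.

Lemma derive2_Plam s : 0 < s < a * lam ->
  derive1 (derive1 (Plam a lam)) s = - a^-1.
Proof.
move=> s_in; rewrite derive1E (@near_eq_derive _ _ _ _ mcp_slope).
  exact: (@derive_val _ _ _ _ _ _ _ (is_derive_mcp_slope s)).
have : s \in `]0, a * lam[ by rewrite in_itv.
by move/near_in_itvoo; apply: filterS => y; rewrite in_itv; apply: derive1_Plam.
Qed.

End MinimaxConcavePenalty.

Lemma sigma_ge0 (R : realType) (p : nat) (j : 'I_p) (X : 'M[R]_p) :
  0 <= sigma j X.
Proof. exact: sqrtr_ge0. Qed.

Lemma S3ONC_sigma_notin_concave_region (R : realType) (p q n : nat)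
    (a lam UL : R) (f : 'M[R]_p -> 'rV[R]_q -> R) (Z : 'I_n -> 'rV[R]_q)
    (X : 'M[R]_p) :
  0 < a -> a < UL^-1 -> S3ONC a lam UL f Z X ->
  forall j : 'I_p, ~ (0 < sigma j X < a * lam).
Proof.
move=> a_gt0 a_lt [_ [_ second_order]] j sigma_in.
have UL_gt0 : 0 < UL by rewrite -invr_gt0 (lt_trans a_gt0).
have UL_lt : UL < a^-1 by rewrite -(invrK UL) ltf_pV2 ?posrE ?invr_gt0.
have := second_order j sigma_in; rewrite derive2_Plam //.
by apply/negP; rewrite -ltNge subr_lt0.
Qed.

Theorem proposition8 (R : realType) (d : measure_display) (Omega : measurableType d)
    (P : probability Omega R) (p q n : nat) (W : set 'rV[R]_q)
    (Z : 'I_n -> Omega -> 'rV[R]_q) (f : 'M[R]_p -> 'rV[R]_q -> R)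
    (a lam UL : R) (XRSAA : Omega -> 'M[R]_p) :
  (0 < n)%N ->
  iid_rvecs P Z ->
  (forall i w, W (Z i w)) ->
  f_measurable W f ->
  0 < a -> 0 < lam -> 1 <= UL ->
  a < UL^-1 ->
  (forall w, psd_cone p (XRSAA w)) ->
  {ae P, forall w, S3ONC a lam UL f (fun i => Z i w) (XRSAA w)} ->
  {ae P, forall w, forall j : 'I_p,
      ~ (0 < `|sigma j (XRSAA w)| < a * lam)}.
Proof.
move=> _ _ _ _ a_gt0 _ _ a_lt _; apply: filterS => w S3ONC_w j.
rewrite ger0_norm ?sigma_ge0 //.
exact: S3ONC_sigma_notin_concave_region S3ONC_w j.
Qed.
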